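(* Let $P$ be a $d$-dimensional $k$-template and let $e=e(P)$. There is a simple $e$-dimensional $k$-template $Q$ such that for every nonempty set $X$, $L(X^e,Q)$ is embeddable into $L(X^d,P)$.
   Context: Here $1\le d<\omega$, $2\le k<\omega$. A $d$-dimensional $k$-template is a set $P$ of $d$-tuples with $|P|=k$. $P$ is simple if for every $m<d$ there are $x,y\in P$ such that for all $i<d$, $x_i=y_i$ iff $i\ne m$. If $P,Q$ are $d$-dimensional templates, $Q$ is a homomorphic image of $P$ if there is a surjection $f:P\to Q$ such that for all $x,y\in P$ and $i<d$, $x_i=y_i$ implies $f(x)_i=f(y)_i$. $L(X^d,P)$ is the $k$-hypergraph with vertex set $X^d$ whose edges are the $k$-templates $R\subseteq X^d$ that are homomorphic images of $P$. A set $I\subseteq\{0,\dots,d-1\}$ is a distinguisher for $P$ if for all distinct $x,y\in P$ there is $i\in I$ with $x_i\ne y_i$; $e(P)$ is the least cardinality of a distinguisher. A map $f:V_1\to V_2$ embeds a $k$-hypergraph $H_1=(V_1,E_1)$ into $H_2=(V_2,E_2)$ if it is an isomorphism of $H_1$ onto a subhypergraph of $H_2$ (a hypergraph $(V',E')$ with $V'\subseteq V_2$, $E'\subseteq E_2$). *)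

From mathcomp Require Import all_boot.
Set Implicit Arguments. Unset Strict Implicit. Unset Printing Implicit Defensive.

Definition tup (d : nat) (T : Type) := 'I_d -> T.

Definition is_kset (U : Type) (k : nat) (R : U -> Prop) : Prop :=
  exists g : 'I_k -> U, injective g /\ (forall x, R x <-> exists i, g i = x).

Definition template (d k : nat) (P : tup d nat -> Prop) : Prop :=
  1 <= d /\ 2 <= k /\ is_kset k P.

Definition simple_template (d : nat) (T : Type) (P : tup d T -> Prop) : Prop :=
  forall m : 'I_d, exists x y, P x /\ P y /\ (forall i, x i = y i <-> i <> m).

Definition hom_image (d : nat) (T U : Type) (P : tup d T -> Prop)
    (Q : tup d U -> Prop) : Prop :=
  exists f : tup d T -> tup d U,
    (forall x, P x -> Q (f x)) /\
    (forall y, Q y -> exists x, P x /\ f x = y) /\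
    (forall x y, P x -> P y -> forall i, x i = y i -> f x i = f y i).

(* Edges of the k-hypergraph L(X^d, P), for P a k-template;
   its vertex set is all of tup d X. *)
Definition L_edge (X : Type) (d k : nat) (P : tup d nat -> Prop)
    (R : tup d X -> Prop) : Prop :=
  is_kset k R /\ hom_image P R.

Definition distinguisher (d : nat) (T : Type) (P : tup d T -> Prop)
    (I : {set 'I_d}) : Prop :=
  forall x y, P x -> P y -> x <> y -> exists i, i \in I /\ x i <> y i.

Definition is_eP (d : nat) (T : Type) (P : tup d T -> Prop) (e : nat) : Prop :=
  (exists I, distinguisher P I /\ #|I| = e) /\
  (forall I, distinguisher P I -> e <= #|I|).

Definition img (A B : Type) (f : A -> B) (R : A -> Prop) : B -> Prop :=
  fun y => exists x, R x /\ f x = y.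

(* f : V1 -> V2 embeds H1 = (V1,E1) into H2 = (V2,E2): f is an isomorphism
   of H1 onto a subhypergraph of H2, i.e. f is injective and maps every
   edge of H1 onto an edge of H2. *)
Definition embeds (V1 V2 : Type) (E1 : (V1 -> Prop) -> Prop)
    (E2 : (V2 -> Prop) -> Prop) : Prop :=
  exists f : V1 -> V2, injective f /\ (forall R, E1 R -> E2 (img f R)).

From mathcomp Require Import all_boot.
From Stdlib Require Import Classical FunctionalExtensionality.
Set Implicit Arguments.

(* Take a distinguisher I of minimum size e and let Q be the restriction of P
   to the coordinates in I.  Since I distinguishes P, restriction is injective
   on P, so Q is again a k-template.  Q is simple by minimality: I minus any
   coordinate m is no longer a distinguisher, so two points of P agree
   outside m but not at m, and their restrictions differ exactly at m.
   Finally L(X^e, Q) embeds into L(X^d, P) by padding e-tuples with a fixed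
   element of X on the coordinates outside I. *)

Lemma is_kset_img (U V : Type) k (R : U -> Prop) (f : U -> V) :
  (forall x y, R x -> R y -> f x = f y -> x = y) ->
  is_kset k R -> is_kset k (img f R).
Proof.
move=> finj [g [ginj gR]]; have Rg i : R (g i) by apply/gR; exists i.
exists (f \o g); split.
  by move=> a b /(finj _ _ (Rg a) (Rg b)) /ginj.
move=> y; split; first by move=> [x [/gR [i <-] <-]]; exists i.
by move=> [i <-]; exists (g i).
Qed.

Lemma distinguisher_gt0 (d : nat) (T : Type) (P : tup d T -> Prop) I x y :
  P x -> P y -> x <> y -> distinguisher P I -> 0 < #|I|.
Proof.
by move=> Px Py xy /(_ x y Px Py xy) [i [iI _]]; apply/card_gt0P; exists i.
Qed.

Lemma not_distinguisherP (d : nat) (T : Type) (P : tup d T -> Prop) J :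
  ~ distinguisher P J ->
  exists x y, [/\ P x, P y, x <> y & forall i, i \in J -> x i = y i].
Proof.
move=> nD; apply: NNPP => none; apply: nD => x y Px Py xy.
apply: NNPP => nodiff; apply: none; exists x, y; split=> // i iJ.
by apply: NNPP => xyi; apply: nodiff; exists i.
Qed.

Section Restriction.
Variables (d : nat) (I : {set 'I_d}).

Definition restrict (T : Type) (x : tup d T) : tup #|I| T :=
  fun j => x (enum_val j).
Arguments restrict {T} x.

Lemma restrict_eq_on (T : Type) (x y : tup d T) :
  restrict x = restrict y -> forall i, i \in I -> x i = y i.
Proof.
move=> rxy i iI; rewrite -(enum_rankK_in iI iI).
exact: (f_equal (fun z => z _) rxy).
Qed.

Lemma restrict_inj_on (T : Type) (P : tup d T -> Prop) x y :
  distinguisher P I -> P x -> P y -> restrict x = restrict y -> x = y.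
Proof.
move=> D Px Py rxy; apply: NNPP => xy.
have [i [iI xyi]] := D x y Px Py xy.
exact/xyi/(restrict_eq_on rxy).
Qed.

Definition extend (X : Type) (c : X) (z : tup #|I| X) : tup d X :=
  fun i => if [pick j | enum_val j == i] is Some j then z j else c.
Arguments extend {X} c z.

Lemma extend_enum_val (X : Type) (c : X) z j : extend c z (enum_val j) = z j.
Proof.
rewrite /extend; case: pickP => [j' /eqP /enum_val_inj -> // | none].
by have := none j; rewrite eqxx.
Qed.

Lemma extend_inj (X : Type) (c : X) : injective (extend c).
Proof.
move=> z1 z2 ext12; apply: functional_extensionality => j.
by rewrite -(extend_enum_val c z1) -(extend_enum_val c z2) ext12.
Qed.

Lemma simple_restrict_min_distinguisher (T : Type) (P : tup d T -> Prop) :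
  distinguisher P I -> (forall J, distinguisher P J -> #|I| <= #|J|) ->
  simple_template (img restrict P).
Proof.
move=> D Imin m; set i := enum_val m.
have notD : ~ distinguisher P (I :\ i).
  move=> /Imin; rewrite (cardsD1 i I) enum_valP.
  by rewrite add1n ltnn.
have [x [y [Px Py xy agree]]] := not_distinguisherP notD.
have agreeI j : j != m -> x (enum_val j) = y (enum_val j).
  move=> jm; apply: agree; rewrite !inE enum_valP andbT.
  by apply: contra jm => /eqP /enum_val_inj ->.
exists (restrict x), (restrict y); split; [by exists x | split; first by exists y].
move=> j; split.
  move=> xyj jm; subst j; apply/xy/(restrict_inj_on D Px Py).
  apply: functional_extensionality => j.
  by case: (eqVneq j m) => [-> // | /agreeI].
by move=> /eqP; apply: agreeI.
Qed.

Lemma hom_image_extend (X T : Type) (c : X) (P : tup d T -> Prop)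
    (R : tup #|I| X -> Prop) :
  hom_image (img restrict P) R -> hom_image P (img (extend c) R).
Proof.
move=> [h [hPR [hsurj hhom]]].
exists (fun x => extend c (h (restrict x))); split; [|split].
- by move=> x Px; exists (h (restrict x)); split=> //; apply: hPR; exists x.
- move=> _ [r [Rr <-]]; have [q [[x [Px <-]] <-]] := hsurj r Rr.
  by exists x.
- move=> x y Px Py i xyi; rewrite /extend; case: pickP => [j /eqP ji | //].
  by apply: hhom; [exists x | exists y | rewrite /restrict ji].
Qed.

Lemma L_edge_extend (X : Type) (c : X) k (P : tup d nat -> Prop) R :
  @L_edge X #|I| k (img restrict P) R -> @L_edge X d k P (img (extend c) R).
Proof.
move=> [kR homR]; split; last exact: hom_image_extend.
by apply: is_kset_img kR => x y _ _; apply: extend_inj.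
Qed.

End Restriction.

Arguments restrict {d} I {T} x.
Arguments extend {d} I {X} c z.

Theorem lemma1p9 (d k : nat) (P : tup d nat -> Prop) (e : nat) :
  template k P -> is_eP P e ->
  exists Q : tup e nat -> Prop,
    template k Q /\ simple_template Q /\
    (forall X : Type, inhabited X ->
       embeds (@L_edge X e k Q) (@L_edge X d k P)).
Proof.
move=> [_ [k_gt1 kP]] [[I [D <-]] Imin].
exists (img (restrict I) P); split; [split; [|split] | split].
- have [g [ginj gP]] := kP; have Pg i : P (g i) by apply/gP; exists i.
  have g01 : g (Ordinal (ltnW k_gt1)) <> g (Ordinal k_gt1).
    by move/ginj/(f_equal val).
  exact: distinguisher_gt0 (Pg _) (Pg _) g01 D.
- exact: k_gt1.
- by apply: is_kset_img kP => x y; apply: restrict_inj_on.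
- exact: simple_restrict_min_distinguisher.
- move=> X [c]; exists (extend I c); split; first exact: extend_inj.
  exact: L_edge_extend.
Qed.
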